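(* Let $0<\alpha<1$ and let $g_\alpha$ be the $L^\infty$ Lorentz metric on $\mathbb{R}^4$ with global coordinates $(t,x,y,z)$ given by $g_\alpha = -dt^2 + \rho$, where $$\rho = \Big(\tfrac{1+\alpha^2}{2}+\tfrac{1-\alpha^2}{2}f_1\Big)dx^2 + \Big(\tfrac{1+\alpha^2}{2}-\tfrac{1-\alpha^2}{2}f_1\Big)dy^2 + (1-\alpha^2)f_2\,dx\,dy + dz^2,$$ with $f_1(x,y)=\frac{x^2-y^2}{x^2+y^2}$, $f_2(x,y)=\frac{2xy}{x^2+y^2}$ for $(x,y)\neq(0,0)$. Then: (i) for every $(x,y,z)$ with $(x,y)\ne(0,0)$ and every $v=(v_1,v_2,v_3)\in\mathbb{R}^3$ one has $\rho(x,y,z)(v,v)\ge \alpha^2(v_1^2+v_2^2)+v_3^2$; in particular $\rho$ is an $L^\infty$ Riemannian metric on $\mathbb{R}^3$; (ii) for every $t_0\in\mathbb{R}$, every inextendible $C^1$ curve $\gamma=(\gamma_0,\gamma_1)\colon I\to\mathbb{R}\times\mathbb{R}^3$ ($I$ an open interval) with $\dot\gamma(s)\neq 0$ for all $s$ and $g_\alpha(\gamma(s))(\dot\gamma(s),\dot\gamma(s))<0$ for almost every $s$ meets the hypersurface $\{t_0\}\times\mathbb{R}^3$ exactly once.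
   Context: Here $f_1,f_2$ are Borel measurable bounded functions (their values on the null set $\{x=y=0\}$ are irrelevant), so $s\mapsto g_\alpha(\gamma(s))(\dot\gamma(s),\dot\gamma(s))$ is Borel measurable for $C^1$ curves. A curve is inextendible if it has no endpoint (no limit) at either end of its parameter interval. *)

From HB Require Import structures.
From mathcomp Require Import all_boot all_order all_algebra.
From mathcomp Require Import all_classical all_reals all_analysis.
Set Implicit Arguments. Unset Strict Implicit. Unset Printing Implicit Defensive.
Import Order.TTheory GRing.Theory Num.Theory.
Import numFieldNormedType.Exports.
Local Open Scope classical_set_scope.
Local Open Scope ring_scope.

(* f1, f2 on (x,y) <> (0,0); at the null set {x = y = 0} they take the
   arbitrary constant values c1, c2 (the theorem is stated for every choice). *)
Definition f1 {R : realType} (c1 x y : R) : R :=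
  if (x == 0) && (y == 0) then c1 else (x ^+ 2 - y ^+ 2) / (x ^+ 2 + y ^+ 2).
Definition f2 {R : realType} (c2 x y : R) : R :=
  if (x == 0) && (y == 0) then c2 else (2 * x * y) / (x ^+ 2 + y ^+ 2).

(* rho(x,y,z)(v,v) ; dx dy is the symmetric product, so the cross term in
   rho(v,v) is (1-alpha^2) f2 v1 v2. *)
Definition rho {R : realType} (alpha c1 c2 x y z v1 v2 v3 : R) : R :=
  ((1 + alpha ^+ 2) / 2 + (1 - alpha ^+ 2) / 2 * f1 c1 x y) * v1 ^+ 2
  + ((1 + alpha ^+ 2) / 2 - (1 - alpha ^+ 2) / 2 * f1 c1 x y) * v2 ^+ 2
  + (1 - alpha ^+ 2) * f2 c2 x y * v1 * v2
  + v3 ^+ 2.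

Definition g_alpha {R : realType} (alpha c1 c2 t x y z w v1 v2 v3 : R) : R :=
  - w ^+ 2 + rho alpha c1 c2 x y z v1 v2 v3.

Definition C1_on {R : realType} (I : set R) (f : R -> R) : Prop :=
  forall s, I s -> derivable f s 1 /\ {for s, continuous (derive1 f)}.

Definition has_right_endpoint {R : realType} (I : set R) (g0 g1 g2 g3 : R -> R)
  : Prop :=
  exists p0 p1 p2 p3 : R, forall eps : R, 0 < eps ->
    exists s0, I s0 /\ forall s, I s -> s0 <= s ->
      [/\ `|g0 s - p0| < eps, `|g1 s - p1| < eps, `|g2 s - p2| < eps
        & `|g3 s - p3| < eps].
Definition has_left_endpoint {R : realType} (I : set R) (g0 g1 g2 g3 : R -> R)
  : Prop :=
  exists p0 p1 p2 p3 : R, forall eps : R, 0 < eps ->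
    exists s0, I s0 /\ forall s, I s -> s <= s0 ->
      [/\ `|g0 s - p0| < eps, `|g1 s - p1| < eps, `|g2 s - p2| < eps
        & `|g3 s - p3| < eps].

Definition inextendible {R : realType} (I : set R) (g0 g1 g2 g3 : R -> R)
  : Prop :=
  ~ has_right_endpoint I g0 g1 g2 g3 /\ ~ has_left_endpoint I g0 g1 g2 g3.

(* (i) is the identity
     rho(v, v) - alpha^2 (v1^2 + v2^2) - v3^2 = (1 - alpha^2) (x v1 + y v2)^2 / (x^2 + y^2).
   For (ii), (i) and the continuity of the velocity upgrade the almost-everywhere
   timelike condition to alpha^2 (g1'^2 + g2'^2) + g3'^2 <= g0'^2 everywhere; on
   stretches of the axis x = y = 0, where f1 and f2 are arbitrary, g1' = g2' = 0.
   Since the velocity never vanishes, neither does g0', so g0 is strictly monotone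
   and each spatial component varies by at most alpha^-1 times the variation of
   g0. If g0 stayed on one side of t0 near an end of the interval, all components
   would converge there and the curve would have an endpoint; so g0 takes values
   on both sides of t0, and it takes the value t0 exactly once by the intermediate
   value theorem and strict monotonicity. *)

From HB Require Import structures.
From mathcomp Require Import all_boot all_order all_algebra.
From mathcomp Require Import all_classical all_reals all_analysis.
From mathcomp Require Import ring lra.
Import Order.TTheory GRing.Theory Num.Theory.
Import numFieldNormedType.Exports.
Set Implicit Arguments. Unset Strict Implicit. Unset Printing Implicit Defensive.
Local Open Scope classical_set_scope.
Local Open Scope ring_scope.

Section Causality.
Variable R : realType.

Lemma rho_lower_bound (alpha c1 c2 x y z v1 v2 v3 : R) :
  alpha ^+ 2 <= 1 -> (x != 0) || (y != 0) ->
  alpha ^+ 2 * (v1 ^+ 2 + v2 ^+ 2) + v3 ^+ 2 <= rho alpha c1 c2 x y z v1 v2 v3.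
Proof.
move=> alpha1 xy.
have r0 : x ^+ 2 + y ^+ 2 != 0 by rewrite paddr_eq0 ?sqr_ge0 // !sqrf_eq0 negb_and.
have /negbTE xy0 : ~~ ((x == 0) && (y == 0)) by rewrite negb_and.
rewrite -subr_ge0 /rho /f1 /f2 xy0.
set rhs := (X in 0 <= X).
have -> : rhs = (1 - alpha ^+ 2) * (x * v1 + y * v2) ^+ 2 / (x ^+ 2 + y ^+ 2).
  by rewrite /rhs; field.
by rewrite divr_ge0 ?addr_ge0 ?sqr_ge0 // mulr_ge0 ?sqr_ge0 // subr_ge0.
Qed.

Lemma g_alpha_lt0_speed_bound (alpha c1 c2 t x y z w v1 v2 v3 : R) :
  alpha ^+ 2 <= 1 -> ((x != 0) || (y != 0)) || ((v1 == 0) && (v2 == 0)) ->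
  g_alpha alpha c1 c2 t x y z w v1 v2 v3 < 0 ->
  alpha ^+ 2 * (v1 ^+ 2 + v2 ^+ 2) + v3 ^+ 2 < w ^+ 2.
Proof.
rewrite /g_alpha => alpha1 /orP[xy | /andP[/eqP-> /eqP->]].
  by have := rho_lower_bound c1 c2 z v1 v2 v3 alpha1 xy; lra.
by rewrite /rho !expr0n /= !(mulr0, addr0, add0r); lra.
Qed.

Lemma speed_component_bound (alpha w v1 v2 v3 : R) : 0 < alpha <= 1 ->
  alpha ^+ 2 * (v1 ^+ 2 + v2 ^+ 2) + v3 ^+ 2 <= w ^+ 2 ->
  [/\ `|v1| <= alpha^-1 * `|w|, `|v2| <= alpha^-1 * `|w| & `|v3| <= alpha^-1 * `|w|].
Proof.
move=> /andP[alpha0 alpha1] causal.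
have bound v : alpha ^+ 2 * v ^+ 2 <= w ^+ 2 -> `|v| <= alpha^-1 * `|w|.
  rewrite -(real_normK (num_real v)) -(real_normK (num_real w)) ler_pdivlMl // => h.
  by have := normr_ge0 v; have := normr_ge0 w; nra.
have alpha21 : alpha ^+ 2 <= 1 by rewrite expr_le1 // ltW.
have := mulr_ge0 (sqr_ge0 alpha) (sqr_ge0 v1).
have := mulr_ge0 (sqr_ge0 alpha) (sqr_ge0 v2).
have := ler_piMl (sqr_ge0 v3) alpha21; have := sqr_ge0 v3.
by move=> *; split; apply: bound; lra.
Qed.

Lemma max_in (A : set R) s t : A s -> A t -> A (Num.max s t).
Proof. by rewrite /Num.max; case: ifP. Qed.

Section RightEnd.
Variable I : set R.

Definition right_limit (F : R -> R) (p : R) := forall eps, 0 < eps ->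
  exists s0, I s0 /\ forall s, I s -> s0 <= s -> `|F s - p| < eps.

Lemma right_limit_sup (F : R -> R) (M x : R) : I x ->
  {in I &, nondecreasing_fun F} -> (forall s, I s -> F s <= M) ->
  right_limit F (sup (F @` I)).
Proof.
move=> Ix ndF FM.
have supF : has_sup (F @` I).
  by split; [exists (F x), x | exists M => _ [s Is <-]; exact: FM].
move=> eps e0; have [_ [s0 Is0 <-] ltF] := sup_adherent e0 supF.
exists s0; split => // s Is s0s.
have Fs_sup : F s <= sup (F @` I) by apply: sup_upper_bound => //; exists s.
have := ndF _ _ (mem_set Is0) (mem_set Is) s0s.
by rewrite distrC ger0_norm ?subr_ge0 //; lra.
Qed.

Lemma right_limitB (F H : R -> R) (p q : R) : right_limit F p -> right_limit H q ->
  right_limit (fun s => F s - H s) (p - q).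
Proof.
move=> Fp Hq eps e0; have e20 : 0 < eps / 2 by rewrite divr_gt0.
have [s1 [Is1 F1]] := Fp _ e20; have [s2 [Is2 H2]] := Hq _ e20.
exists (Num.max s1 s2); split; first exact: max_in.
move=> s Is; rewrite ge_max => /andP[s1s s2s].
have := F1 s Is s1s; have := H2 s Is s2s.
by rewrite !ltr_norml => /andP[? ?] /andP[? ?]; apply/andP; split; lra.
Qed.

Lemma nondecreasing_bounded_by_sum (F1 F2 : R -> R) (B x : R) : I x ->
  {in I &, nondecreasing_fun F1} -> {in I &, nondecreasing_fun F2} ->
  (forall s, I s -> F1 s + F2 s <= B) ->
  forall s, I s -> F1 s <= Num.max (F1 x) (B - F2 x).
Proof.
move=> Ix nd1 nd2 sumB s Is; rewrite le_max.
have [sx | xs] := leP s x; first by rewrite nd1 ?inE.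
have := nd2 _ _ (mem_set Ix) (mem_set Is) (ltW xs); have := sumB s Is.
by move=> ? ?; apply/orP; right; lra.
Qed.

(* [controlled K G g] says [|g t - g s| <= K * (G t - G s)] for [s <= t] in [I]. *)
Definition controlled (K : R) (G g : R -> R) :=
  {in I &, nondecreasing_fun (fun s => K * G s + g s)} /\
  {in I &, nondecreasing_fun (fun s => K * G s - g s)}.

Lemma controlled_right_limit (K t0 x : R) (G g : R -> R) : I x -> 0 <= K ->
  {in I &, nondecreasing_fun G} -> (forall s, I s -> G s <= t0) ->
  controlled K G g -> exists p, right_limit g p.
Proof.
move=> Ix K0 ndG Gt0 [ndp ndm].
have ndKG : {in I &, nondecreasing_fun (fun s => K * G s)}.
  by move=> s t Is It st; rewrite ler_wpM2l // ndG.
have limKG := right_limit_sup Ix ndKG (fun s Is => ler_wpM2l K0 (Gt0 s Is)).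
have sumB s : I s -> (K * G s + g s) + (K * G s - g s) <= 2 * K * t0.
  by move=> Is; have := ler_wpM2l K0 (Gt0 s Is); lra.
have limp := right_limit_sup Ix ndp (nondecreasing_bounded_by_sum Ix ndp ndm sumB).
have -> : g = (fun s => (K * G s + g s) - K * G s) by apply/funext => s; ring.
by eexists; exact: right_limitB limp limKG.
Qed.

Lemma bounded_has_right_endpoint (K t0 x : R) (G g1 g2 g3 : R -> R) : I x -> 0 <= K ->
  {in I &, nondecreasing_fun G} ->
  controlled K G g1 -> controlled K G g2 -> controlled K G g3 ->
  (forall s, I s -> G s <= t0) -> has_right_endpoint I G g1 g2 g3.
Proof.
move=> Ix K0 ndG c1 c2 c3 Gt0.
have lim0 := right_limit_sup Ix ndG Gt0.
have [p1 lim1] := controlled_right_limit Ix K0 ndG Gt0 c1.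
have [p2 lim2] := controlled_right_limit Ix K0 ndG Gt0 c2.
have [p3 lim3] := controlled_right_limit Ix K0 ndG Gt0 c3.
exists (sup (G @` I)), p1, p2, p3 => eps e0.
have [s0 [Is0 h0]] := lim0 _ e0; have [s1 [Is1 h1]] := lim1 _ e0.
have [s2 [Is2 h2]] := lim2 _ e0; have [s3 [Is3 h3]] := lim3 _ e0.
exists (Num.max (Num.max s0 s1) (Num.max s2 s3)); split; first by do !apply: max_in.
move=> s Is; rewrite !ge_max => /andP[/andP[? ?] /andP[? ?]].
by split; [exact: h0 | exact: h1 | exact: h2 | exact: h3].
Qed.

End RightEnd.

Lemma controlled_reflect (I : set R) (K : R) (G g : R -> R) : controlled I K G g ->
  controlled [set s | I (- s)] K (fun s => - G (- s)) (fun s => g (- s)).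
Proof.
move=> [ndp ndm]; split => s t /set_mem Is /set_mem It st.
  by have := ndm _ _ (mem_set It) (mem_set Is); rewrite lerN2 => /(_ st); lra.
by have := ndp _ _ (mem_set It) (mem_set Is); rewrite lerN2 => /(_ st); lra.
Qed.

Lemma has_left_endpoint_reflect (I : set R) (g0 g1 g2 g3 : R -> R) :
  has_right_endpoint [set s | I (- s)] (fun s => g0 (- s)) (fun s => g1 (- s))
    (fun s => g2 (- s)) (fun s => g3 (- s)) ->
  has_left_endpoint I g0 g1 g2 g3.
Proof.
move=> [p0 [p1 [p2 [p3 near_p]]]]; exists p0, p1, p2, p3 => eps e0.
have [s0 [Is0 h]] := near_p _ e0; exists (- s0); split => // s Is ss0.
by have := h (- s); rewrite /= opprK; apply => //; rewrite lerNr.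
Qed.

Lemma has_right_endpointN (I : set R) (g0 g1 g2 g3 : R -> R) :
  has_right_endpoint I (fun s => - g0 s) g1 g2 g3 -> has_right_endpoint I g0 g1 g2 g3.
Proof.
move=> [p0 [p1 [p2 [p3 near_p]]]]; exists (- p0), p1, p2, p3 => eps e0.
have [s0 [Is0 h]] := near_p _ e0; exists s0; split => // s Is s0s.
by have [? ? ? ?] := h s Is s0s; split; rewrite // -normrN opprD opprK.
Qed.

Lemma has_left_endpointN (I : set R) (g0 g1 g2 g3 : R -> R) :
  has_left_endpoint I (fun s => - g0 s) g1 g2 g3 -> has_left_endpoint I g0 g1 g2 g3.
Proof.
move=> [p0 [p1 [p2 [p3 near_p]]]]; exists (- p0), p1, p2, p3 => eps e0.
have [s0 [Is0 h]] := near_p _ e0; exists s0; split => // s Is ss0.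
by have [? ? ? ?] := h s Is ss0; split; rewrite // -normrN opprD opprK.
Qed.

Lemma bounded_has_left_endpoint (I : set R) (K t0 x : R) (G g1 g2 g3 : R -> R) :
  I x -> 0 <= K -> {in I &, nondecreasing_fun G} ->
  controlled I K G g1 -> controlled I K G g2 -> controlled I K G g3 ->
  (forall s, I s -> t0 <= G s) -> has_left_endpoint I G g1 g2 g3.
Proof.
move=> Ix K0 ndG c1 c2 c3 t0G.
apply/has_left_endpoint_reflect/has_right_endpointN.
apply: (bounded_has_right_endpoint (x := - x) (t0 := - t0) _ K0).
- by rewrite /= opprK.
- move=> s t /set_mem Is /set_mem It st.
  by rewrite lerN2 ndG ?inE // lerN2.
- exact: controlled_reflect.
- exact: controlled_reflect.
- exact: controlled_reflect.
- by move=> s Is; rewrite lerN2; exact: t0G.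
Qed.

Lemma lebesgue_null_avoid_itvoo (N : set R) (u v : R) : measurable N ->
  (@lebesgue_measure R) N = 0%E -> u < v -> exists y, u < y < v /\ ~ N y.
Proof.
move=> mN N0 uv; apply: contrapT => /forallNP uvN.
have sub : [set` `]u, v[] `<=` N.
  move=> y /=; rewrite in_itv /= => yuv; apply: contrapT => Ny.
  exact: uvN y (conj yuv Ny).
have : ((@lebesgue_measure R) [set` `]u, v[] <= (@lebesgue_measure R) N)%E.
  by apply: le_measure => //; rewrite inE.
by rewrite N0 lebesgue_measure_itv /= lte_fin uv -EFinB lee_fin subr_le0 leNgt uv.
Qed.

Lemma is_derive1 (f : R -> R) s : derivable f s 1 -> is_derive s 1 f (derive1 f s).
Proof. by move=> df; rewrite derive1E; exact: derivableP. Qed.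

Lemma derivable1_continuous (f : R -> R) (x : R) : derivable f x 1 ->
  {for x, continuous f}.
Proof. by move=> df; apply: differentiable_continuous; exact/derivable1_diffP. Qed.

Lemma nbhs_exists_itvoo (x : R) (P : R -> Prop) : (\forall y \near x, P y) ->
  exists2 e, 0 < e & forall y, x - e < y < x + e -> P y.
Proof.
move=> /nbhs_ballP[e /= e0 xeP]; exists e => // y xey; apply: xeP.
by rewrite /ball /= ltr_distlC.
Qed.

Section OpenInterval.
Variables a b : \bar R.
Let I := [set s : R | (a < s%:E < b)%E].

Lemma eitv_nonempty : (a < b)%E -> exists s, I s.
Proof.
rewrite /I; case: a => [r||]; case: b => [r'||] //= ab.
- exists ((r + r') / 2); rewrite !lte_fin; move: ab; rewrite lte_fin => ab.
  by apply/andP; split; lra.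
- by exists (r + 1); rewrite !lte_fin ltry andbT; lra.
- by exists (r' - 1); rewrite !lte_fin ltNyr /=; lra.
- by exists 0; rewrite ltNyr ltry.
Qed.

Lemma eitv_nbhs s : I s -> \forall y \near s, I y.
Proof.
move=> /andP[aS Sb].
have aY : \forall y \near s, (a < y%:E)%E.
  move: aS; case: a => [r||] //= rs; last by near=> y; exact: ltNyr.
  by rewrite lte_fin in rs; near=> y; rewrite lte_fin; near: y; exact: lt_nbhsr.
have Yb : \forall y \near s, (y%:E < b)%E.
  move: Sb; case: b => [r||] //= sr; last by near=> y; exact: ltry.
  by rewrite lte_fin in sr; near=> y; rewrite lte_fin; near: y; exact: lt_nbhsl.
by near=> y; apply/andP; split; near: y.
Unshelve. all: end_near.
Qed.

Lemma eitv_itvcc s t : I s -> I t -> forall x, x \in `[s, t] -> I x.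
Proof.
move=> /andP[aS _] /andP[_ tb] x; rewrite in_itv /= => /andP[sx xt]; apply/andP.
by split; [apply: lt_le_trans aS _ | apply: le_lt_trans tb]; rewrite lee_fin.
Qed.

Lemma nondecreasing_derive (f : R -> R) : (forall s, I s -> derivable f s 1) ->
  (forall s, I s -> 0 <= derive1 f s) -> {in I &, nondecreasing_fun f}.
Proof.
move=> df f'0 s t /set_mem Is /set_mem It st.
have st_I := eitv_itvcc Is It.
apply: (ger0_derive1_ndecr (a := s) (b := t)) => //.
- by move=> x /subset_itv_oo_cc/st_I; exact: df.
- by move=> x /subset_itv_oo_cc/st_I; exact: f'0.
- by apply: derivable_within_continuous => x /st_I; exact: df.
Qed.

Lemma increasing_derive (f : R -> R) : (forall s, I s -> derivable f s 1) ->
  (forall s, I s -> 0 < derive1 f s) -> {in I &, {homo f : x y / x < y}}.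
Proof.
move=> df f'0 s t /set_mem Is /set_mem It st.
have st_I := eitv_itvcc Is It.
apply: (gtr0_derive1_incr (a := s) (b := t)) => //.
- by move=> x /subset_itv_oo_cc/st_I; exact: df.
- by move=> x /subset_itv_oo_cc/st_I; exact: f'0.
- by apply: derivable_within_continuous => x /st_I; exact: df.
Qed.

Lemma eitv_IVT (f : R -> R) (s t v : R) : (forall x, I x -> {for x, continuous f}) ->
  I s -> I t -> Num.min (f s) (f t) <= v <= Num.max (f s) (f t) ->
  exists2 c, I c & f c = v.
Proof.
move=> cf; wlog st : s t / s <= t.
  move=> wlog Is It; have [/wlog|/ltW /wlog] := leP s t; first exact.
  by rewrite minC maxC; exact.
move=> Is It vf; have st_I := eitv_itvcc Is It.
have [|c /st_I Ic fc] := IVT st _ vf; last by exists c.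
by apply: continuous_in_subspaceT => x /set_mem/st_I; exact: cf.
Qed.

Lemma continuous_nonvanishing_sign (f : R -> R) :
  (forall x, I x -> {for x, continuous f}) -> (forall x, I x -> f x != 0) ->
  (forall x, I x -> 0 < f x) \/ (forall x, I x -> f x < 0).
Proof.
move=> cf f0; have [|] := pselect (forall x, I x -> 0 < f x); first by left.
move=> /existsNP[t /not_implyP[It /negP]]; rewrite -leNgt => ft0.
right => s Is; rewrite ltNge; apply/negP => f0s.
have [|c Ic fc0] := eitv_IVT (v := 0) cf Is It.
  by rewrite ge_min le_max ft0 f0s orbT.
by have := f0 c Ic; rewrite fc0 eqxx.
Qed.

Lemma controlled_derive (K : R) (G g : R -> R) :
  (forall s, I s -> derivable G s 1) -> (forall s, I s -> derivable g s 1) ->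
  (forall s, I s -> `|derive1 g s| <= K * derive1 G s) -> controlled I K G g.
Proof.
move=> dG dg gG; split; apply: nondecreasing_derive => s Is;
  have dGs := is_derive1 (dG s Is); have dgs := is_derive1 (dg s Is).
- by case: (is_deriveD (is_deriveZ K dGs) dgs).
- rewrite derive1E (derive_val (is_derive := is_deriveD (is_deriveZ K dGs) dgs)).
  by have := gG s Is; rewrite ler_norml => /andP[]; rewrite /GRing.scale /=; lra.
- by case: (is_deriveB (is_deriveZ K dGs) dgs).
- rewrite derive1E (derive_val (is_derive := is_deriveB (is_deriveZ K dGs) dgs)).
  by have := gG s Is; rewrite ler_norml => /andP[]; rewrite /GRing.scale /=; lra.
Qed.

Section Crossing.
Variables (K : R) (g1 g2 g3 : R -> R).
Hypotheses (K0 : 0 <= K) (dg1 : forall s, I s -> derivable g1 s 1)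
  (dg2 : forall s, I s -> derivable g2 s 1) (dg3 : forall s, I s -> derivable g3 s 1).

Lemma increasing_crossing (t0 : R) (G : R -> R) : (a < b)%E ->
  (forall s, I s -> derivable G s 1) -> (forall s, I s -> 0 < derive1 G s) ->
  (forall s, I s -> [/\ `|derive1 g1 s| <= K * derive1 G s,
    `|derive1 g2 s| <= K * derive1 G s & `|derive1 g3 s| <= K * derive1 G s]) ->
  inextendible I G g1 g2 g3 -> exists! s, I s /\ G s = t0.
Proof.
move=> ab dG G'0 bounds [noright noleft].
have [x Ix] := eitv_nonempty ab.
have incrG := increasing_derive dG G'0.
have ndG := nondecreasing_derive dG (fun s Is => ltW (G'0 s Is)).
have c1 : controlled I K G g1 by apply: controlled_derive => // s /bounds[].
have c2 : controlled I K G g2 by apply: controlled_derive => // s /bounds[].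
have c3 : controlled I K G g3 by apply: controlled_derive => // s /bounds[].
have [s1 [Is1 t0s1]] : exists s, I s /\ t0 <= G s.
  apply: contrapT => /forallNP above; apply: noright.
  apply: (bounded_has_right_endpoint (t0 := t0) Ix K0 ndG c1 c2 c3) => s Is.
  by rewrite leNgt; apply/negP => /ltW t0s; exact: above s (conj Is t0s).
have [s2 [Is2 s2t0]] : exists s, I s /\ G s <= t0.
  apply: contrapT => /forallNP below; apply: noleft.
  apply: (bounded_has_left_endpoint (t0 := t0) Ix K0 ndG c1 c2 c3) => s Is.
  by rewrite leNgt; apply/negP => /ltW st0; exact: below s (conj Is st0).
have cG s (Is : I s) := derivable1_continuous (dG s Is).
have [|c Ic Gc] := eitv_IVT cG Is2 Is1 (v := t0).
  by rewrite ge_min le_max s2t0 t0s1 orbT.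
exists c; split => // y [Iy Gy].
case: (ltgtP c y) => // cy.
- by have := incrG _ _ (mem_set Ic) (mem_set Iy) cy; lra.
- by have := incrG _ _ (mem_set Iy) (mem_set Ic) cy; lra.
Qed.

Lemma nonvanishing_crossing (t0 : R) (g0 : R -> R) : (a < b)%E ->
  (forall s, I s -> derivable g0 s 1) ->
  (forall s, I s -> {for s, continuous (derive1 g0)}) ->
  (forall s, I s -> derive1 g0 s != 0) ->
  (forall s, I s -> [/\ `|derive1 g1 s| <= K * `|derive1 g0 s|,
    `|derive1 g2 s| <= K * `|derive1 g0 s| & `|derive1 g3 s| <= K * `|derive1 g0 s|]) ->
  inextendible I g0 g1 g2 g3 -> exists! s, I s /\ g0 s = t0.
Proof.
move=> ab dg0 cg0' g0'0 bounds [noright noleft].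
have [pos|neg] := continuous_nonvanishing_sign cg0' g0'0.
  apply: increasing_crossing => // s Is.
  by rewrite -(gtr0_norm (pos s Is)); exact: bounds.
have dNg0 s : I s -> derive1 (- g0) s = - derive1 g0 s.
  by move=> Is; rewrite derive1N //; exact: dg0.
case: (@increasing_crossing (- t0) (- g0) ab).
- by move=> s Is; apply: derivableN; exact: dg0.
- by move=> s Is; rewrite dNg0 // oppr_gt0 neg.
- by move=> s Is; rewrite dNg0 // -(ltr0_norm (neg s Is)); exact: bounds.
- by split; [move/has_right_endpointN | move/has_left_endpointN].
rewrite opprfctE => s [[Is /oppr_inj g0s] uniq]; exists s; split => // y [Iy g0y].
by apply: uniq; rewrite g0y.
Qed.

End Crossing.

Section Curve.
Variables (alpha c1 c2 : R) (g0 g1 g2 g3 : R -> R).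
Hypotheses (alpha1 : alpha ^+ 2 <= 1)
  (C1g0 : C1_on I g0) (C1g1 : C1_on I g1) (C1g2 : C1_on I g2) (C1g3 : C1_on I g3)
  (timelike : {ae (@lebesgue_measure R), forall s, I s ->
     g_alpha alpha c1 c2 (g0 s) (g1 s) (g2 s) (g3 s)
       (derive1 g0 s) (derive1 g1 s) (derive1 g2 s) (derive1 g3 s) < 0}).

Let speed_gap s := derive1 g0 s ^+ 2 -
  (alpha ^+ 2 * (derive1 g1 s ^+ 2 + derive1 g2 s ^+ 2) + derive1 g3 s ^+ 2).

(* Off the axis [g1 = g2 = 0] use part (i); if the curve stays on the axis over
   the whole interval, [g1'] and [g2'] vanish there, so the arbitrary values
   [c1], [c2] of [f1], [f2] on the axis drop out of [g_alpha]. *)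
Lemma speed_gap_dense u v : u < v -> (forall x, u < x < v -> I x) ->
  exists y, u < y < v /\ 0 < speed_gap y.
Proof.
move=> uv uvI; have [N [mN N0 notN]] := timelike.
suff [y [yuv [Ny yaxis]]] : exists y, u < y < v /\ ~ N y /\
    ((g1 y != 0) || (g2 y != 0)) || ((derive1 g1 y == 0) && (derive1 g2 y == 0)).
  exists y; split => //; rewrite subr_gt0.
  (* [g_alpha] ignores its [t] and [z] arguments, so unification cannot find them. *)
  apply: (g_alpha_lt0_speed_bound (c1 := c1) (c2 := c2) (t := g0 y) (z := g3 y) alpha1 yaxis).
  apply: contrapT => nonneg; apply: Ny; apply: notN => /= timelike_y.
  exact: nonneg (timelike_y (uvI y yuv)).
have near_uv x : u < x < v -> \forall y \near x, u < y < v.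
  move=> xuv; have := @near_in_itvoo R u v x; rewrite in_itv /= => /(_ xuv).
  by apply: filterS => y; rewrite in_itv.
have [[x [xuv xoff]] | on_axis] :=
  pselect (exists x, u < x < v /\ ((g1 x != 0) || (g2 x != 0))).
  have cg1 := derivable1_continuous (C1g1 (uvI x xuv)).1.
  have cg2 := derivable1_continuous (C1g2 (uvI x xuv)).1.
  have off_near : \forall y \near x, (g1 y != 0) || (g2 y != 0).
    by case/orP: xoff => xoff; [apply: filterS (cvgr_neq0 _ cg1 xoff) |
      apply: filterS (cvgr_neq0 _ cg2 xoff)] => y ->; rewrite ?orbT.
  have near_x : \forall y \near x, u < y < v /\ ((g1 y != 0) || (g2 y != 0)).
    by apply: filterS2 (near_uv x xuv) off_near.
  have [e e0 xe_off] := nbhs_exists_itvoo near_x.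
  have [|y [xey Ny]] := lebesgue_null_avoid_itvoo mN N0 (_ : x - e < x + e); first lra.
  by have [yuv yoff] := xe_off y xey; exists y; rewrite yoff.
have [y [yuv Ny]] := lebesgue_null_avoid_itvoo mN N0 uv.
have axis z : u < z < v -> g1 z = 0 /\ g2 z = 0.
  move=> zuv; apply: contrapT => /not_andP off; apply: on_axis; exists z.
  by split => //; case: off => off; apply/orP; [left | right]; apply/eqP.
have flat (g : R -> R) : (forall z, u < z < v -> g z = 0) -> derive1 g y = 0.
  move=> g_axis; rewrite derive1E (@near_eq_derive _ _ _ g (cst 0)) ?derive_cst //.
  by apply: filterS (near_uv y yuv) => z /g_axis.
exists y; rewrite (flat g1) ?(flat g2) ?eqxx ?orbT //.
- by move=> z /axis[].
- by move=> z /axis[].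
Qed.

Lemma causal_velocity s : I s ->
  alpha ^+ 2 * (derive1 g1 s ^+ 2 + derive1 g2 s ^+ 2) + derive1 g3 s ^+ 2
    <= derive1 g0 s ^+ 2.
Proof.
move=> Is; rewrite -subr_ge0 -/(speed_gap s) leNgt; apply/negP => gap_neg.
have cgap : {for s, continuous speed_gap}.
  have [_ c0] := C1g0 Is; have [_ c1'] := C1g1 Is.
  have [_ c2'] := C1g2 Is; have [_ c3] := C1g3 Is.
  apply: cvgB; first exact: cvgM.
  apply: cvgD; last exact: cvgM.
  by apply: cvgM; [exact: cvg_cst | apply: cvgD; exact: cvgM].
have near_s : \forall y \near s, I y /\ speed_gap y < 0.
  by apply: filterS2 (eitv_nbhs Is) (cvgr_lt _ cgap 0 gap_neg) => y.
have [e e0 se_neg] := nbhs_exists_itvoo near_s.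
have se_I y : s - e < y < s + e -> I y by move=> /se_neg[].
have [|y [sey gap_pos]] := speed_gap_dense _ se_I; first lra.
by have [_] := se_neg y sey; lra.
Qed.

End Curve.

End OpenInterval.

End Causality.

Theorem mainTheorem2 (R : realType) (alpha c1 c2 : R) :
  0 < alpha < 1 ->
  (* (i) *)
  (forall x y z v1 v2 v3 : R, (x != 0) || (y != 0) ->
     rho alpha c1 c2 x y z v1 v2 v3 >= alpha ^+ 2 * (v1 ^+ 2 + v2 ^+ 2) + v3 ^+ 2)
  /\
  (* (ii) *)
  (forall (t0 : R) (a b : \bar R) (g0 g1 g2 g3 : R -> R),
     let I := [set s : R | (a < s%:E < b)%E] in
     (a < b)%E ->
     C1_on I g0 -> C1_on I g1 -> C1_on I g2 -> C1_on I g3 ->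
     inextendible I g0 g1 g2 g3 ->
     (forall s, I s ->
        ~ [/\ derive1 g0 s = 0, derive1 g1 s = 0, derive1 g2 s = 0 & derive1 g3 s = 0]) ->
     {ae (@lebesgue_measure R), forall s, I s ->
        g_alpha alpha c1 c2 (g0 s) (g1 s) (g2 s) (g3 s)
          (derive1 g0 s) (derive1 g1 s) (derive1 g2 s) (derive1 g3 s) < 0} ->
     exists! s, I s /\ g0 s = t0).
Proof.
move=> /andP[alpha0 alpha1]; have alpha21 : alpha ^+ 2 <= 1 by rewrite expr_le1 // ltW.
split=> [x y z v1 v2 v3 | t0 a b g0 g1 g2 g3 I ab C1g0 C1g1 C1g2 C1g3 inext moving timelike].
  exact: rho_lower_bound.
have speed_bound s : I s -> [/\ `|derive1 g1 s| <= alpha^-1 * `|derive1 g0 s|,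
    `|derive1 g2 s| <= alpha^-1 * `|derive1 g0 s| &
    `|derive1 g3 s| <= alpha^-1 * `|derive1 g0 s|].
  move=> Is; apply: speed_component_bound; first by rewrite alpha0 ltW.
  exact: causal_velocity alpha21 C1g0 C1g1 C1g2 C1g3 timelike s Is.
have derivable_on g : C1_on I g -> forall s, I s -> derivable g s 1.
  by move=> Cg s /Cg[].
have g0'_neq0 s : I s -> derive1 g0 s != 0.
  move=> Is; apply/eqP => g0'0; apply: (moving s Is).
  have [] := speed_bound s Is; rewrite g0'0 normr0 mulr0 !normr_le0.
  by move=> /eqP ? /eqP ? /eqP ?.
have K0 : 0 <= alpha^-1 by rewrite invr_ge0 ltW.
exact: (nonvanishing_crossing K0 (derivable_on _ C1g1) (derivable_on _ C1g2)
  (derivable_on _ C1g3) t0 ab (derivable_on _ C1g0) (fun s Is => (C1g0 s Is).2)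
  g0'_neq0 speed_bound inext).
Qed.
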